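(* Let $K$ be a scattered compact Hausdorff space and let $X$ and $Y$ be real Banach spaces with $Y$ separable. If $Y$ embeds isomorphically into $C(K,X)$, then there exist a countable metrizable compact space $K_0$ and a separable closed subspace $X_0\subseteq X$ such that $Y$ embeds isomorphically into $C(K_0,X_0)$ and $C(K_0,X_0)$ embeds isomorphically into $C(K,X)$.
   Context: For a compact Hausdorff space $K$ and a real Banach space $X$, $C(K,X)$ denotes the Banach space of continuous functions $f:K\to X$ with the norm $\|f\|=\sup_{x\in K}\|f(x)\|$. An isomorphic embedding is a linear $T$ with $A\|u\|\le\|Tu\|\le B\|u\|$ for some $A,B>0$. A topological space is scattered if every nonempty subset has an isolated point. *)

From Stdlib Require Import Reals List.
Open Scope R_scope.

Record TopSpace := {
  pt :> Type;
  is_open : (pt -> Prop) -> Prop;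
  open_full : is_open (fun _ => True);
  open_inter : forall U V, is_open U -> is_open V -> is_open (fun x => U x /\ V x);
  open_union : forall F : (pt -> Prop) -> Prop,
      (forall U, F U -> is_open U) -> is_open (fun x => exists U, F U /\ U x)
}.
Arguments is_open {t} _.

Definition top_compact (K : TopSpace) : Prop :=
  forall F : (K -> Prop) -> Prop,
    (forall U, F U -> is_open U) ->
    (forall x : K, exists U, F U /\ U x) ->
    exists l : list (K -> Prop), Forall F l /\ (forall x : K, exists U, In U l /\ U x).

Definition hausdorff (K : TopSpace) : Prop :=
  forall x y : K, x <> y ->
    exists U V, is_open U /\ is_open V /\ U x /\ V y /\ (forall z, U z -> V z -> False).

Definition scattered (K : TopSpace) : Prop :=
  forall A : K -> Prop, (exists x, A x) ->
    exists x, A x /\ exists U, is_open U /\ U x /\ (forall z, U z -> A z -> z = x).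

Definition countable (K : TopSpace) : Prop :=
  exists f : K -> nat, forall x y, f x = f y -> x = y.

Definition is_metric {T : Type} (d : T -> T -> R) : Prop :=
  (forall x y, 0 <= d x y) /\ (forall x y, d x y = 0 <-> x = y) /\
  (forall x y, d x y = d y x) /\ (forall x y z, d x z <= d x y + d y z).

Definition metrizable (K : TopSpace) : Prop :=
  exists d : K -> K -> R, is_metric d /\
    forall U : K -> Prop,
      is_open U <-> (forall x, U x -> exists r, 0 < r /\ forall z, d x z < r -> U z).

Record Banach := {
  bcar :> Type;
  bzero : bcar;
  badd : bcar -> bcar -> bcar;
  bopp : bcar -> bcar;
  bscal : R -> bcar -> bcar;
  bnorm : bcar -> R;
  badd_assoc : forall x y z, badd x (badd y z) = badd (badd x y) z;
  badd_comm : forall x y, badd x y = badd y x;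
  badd_zero : forall x, badd x bzero = x;
  badd_opp : forall x, badd x (bopp x) = bzero;
  bscal_one : forall x, bscal 1 x = x;
  bscal_assoc : forall a b x, bscal a (bscal b x) = bscal (a * b) x;
  bscal_distr_l : forall a x y, bscal a (badd x y) = badd (bscal a x) (bscal a y);
  bscal_distr_r : forall a b x, bscal (a + b) x = badd (bscal a x) (bscal b x);
  bnorm_zero : forall x, bnorm x = 0 -> x = bzero;
  bnorm_scal : forall a x, bnorm (bscal a x) = Rabs a * bnorm x;
  bnorm_triangle : forall x y, bnorm (badd x y) <= bnorm x + bnorm y;
  bcomplete : forall u : nat -> bcar,
    (forall eps, 0 < eps -> exists N, forall m n, (N <= m)%nat -> (N <= n)%nat ->
        bnorm (badd (u m) (bopp (u n))) < eps) ->
    exists l, forall eps, 0 < eps -> exists N, forall n, (N <= n)%nat ->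
        bnorm (badd (u n) (bopp l)) < eps
}.
Arguments bzero {_}. Arguments badd {_}. Arguments bopp {_}.
Arguments bscal {_}. Arguments bnorm {_}.

Definition bsub {X : Banach} (x y : X) : X := badd x (bopp y).

Definition separable (X : Banach) : Prop :=
  exists u : nat -> X, forall x eps, 0 < eps -> exists n, bnorm (bsub x (u n)) < eps.

Definition closed_subspace {X : Banach} (X0 : X -> Prop) : Prop :=
  X0 bzero /\ (forall x y, X0 x -> X0 y -> X0 (badd x y)) /\
  (forall a x, X0 x -> X0 (bscal a x)) /\
  (forall (u : nat -> X) l, (forall n, X0 (u n)) ->
     (forall eps, 0 < eps -> exists N, forall n, (N <= n)%nat -> bnorm (bsub (u n) l) < eps) ->
     X0 l).

Definition separable_sub {X : Banach} (X0 : X -> Prop) : Prop :=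
  exists u : nat -> X, (forall n, X0 (u n)) /\
    forall x eps, X0 x -> 0 < eps -> exists n, bnorm (bsub x (u n)) < eps.

Definition continuous {K : TopSpace} {X : Banach} (f : K -> X) : Prop :=
  forall x eps, 0 < eps ->
    exists U, is_open U /\ U x /\ forall z, U z -> bnorm (bsub (f z) (f x)) < eps.

(* s is the sup norm sup_{k in K} ||f k|| (0 if K is empty) *)
Definition is_supnorm {K : TopSpace} {X : Banach} (f : K -> X) (s : R) : Prop :=
  is_lub (fun r => r = 0 \/ exists k, r = bnorm (f k)) s.

Definition in_CKX0 {K : TopSpace} {X : Banach} (X0 : X -> Prop) (f : K -> X) : Prop :=
  continuous f /\ forall k, X0 (f k).

Definition embeds_Banach_into_C (Y : Banach) (K : TopSpace) (X : Banach) (X0 : X -> Prop) : Prop :=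
  exists (T : Y -> K -> X) (A B : R), 0 < A /\ 0 < B /\
    (forall y, in_CKX0 X0 (T y)) /\
    (forall a y1 y2 k, T (badd (bscal a y1) y2) k = badd (bscal a (T y1 k)) (T y2 k)) /\
    (forall y, exists s, is_supnorm (T y) s /\ A * bnorm y <= s /\ s <= B * bnorm y).

Definition embeds_C_into_C (K0 : TopSpace) (X : Banach) (X0 : X -> Prop)
    (K : TopSpace) (X' : Banach) (X1 : X' -> Prop) : Prop :=
  exists (S : (K0 -> X) -> (K -> X')) (A B : R), 0 < A /\ 0 < B /\
    (forall f, in_CKX0 X0 f -> in_CKX0 X1 (S f)) /\
    (forall a f g, in_CKX0 X0 f -> in_CKX0 X0 g ->
       forall k, S (fun t => badd (bscal a (f t)) (g t)) k = badd (bscal a (S f k)) (S g k)) /\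
    (forall f, in_CKX0 X0 f -> exists s s', is_supnorm f s /\ is_supnorm (S f) s' /\
        A * s <= s' /\ s' <= B * s).

(* Let (u n) be dense in Y and h n = T (u n).  The sequence k |-> (h n k)_n identifies
   points of K not separated by any h n; the set K0 of these sequences carries the
   metric dist x y = sup_n w n |x n - y n|, with weights w n making the sup uniform, and
   q : K -> K0 is a continuous surjection.  Each T y is a uniform limit of the h n, so
   it is constant on the fibres of q and factors as T0 y o q with T0 y continuous; this
   embeds Y into C(K0, X0), and f |-> f o q embeds C(K0, X0) isometrically in C(K, X). *)

From Stdlib Require Import Reals List Cantor FunctionalExtensionality PropExtensionality ProofIrrelevance ClassicalEpsilon Classical Lra Lia ZArith.
From mathcomp Require classical_sets ssreflect choice.
Open Scope R_scope.

Arguments badd_assoc {_}. Arguments badd_comm {_}. Arguments badd_zero {_}. Arguments badd_opp {_}.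
Arguments bscal_one {_}. Arguments bscal_assoc {_}. Arguments bscal_distr_l {_}. Arguments bscal_distr_r {_}.
Arguments bnorm_zero {_}. Arguments bnorm_scal {_}. Arguments bnorm_triangle {_}.

Section BanachLemmas.
Context {X : Banach}.
Implicit Types x y z : X.

Lemma badd_zero_l x : badd bzero x = x.
Proof. rewrite badd_comm; apply badd_zero. Qed.

Lemma badd_cancel x y z : badd x y = badd x z -> y = z.
Proof.
  intros H.
  assert (E : forall w, badd (bopp x) (badd x w) = w).
  { intros w. rewrite badd_assoc, (badd_comm (bopp x) x), badd_opp, badd_zero_l. reflexivity. }
  rewrite <- (E y), <- (E z), H. reflexivity.
Qed.

Lemma bscal_zero_l x : bscal 0 x = bzero.
Proof.
  apply (badd_cancel (bscal 0 x)). rewrite <- bscal_distr_r, Rplus_0_r, badd_zero. reflexivity.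
Qed.

Lemma bscal_zero_r a : bscal a (@bzero X) = bzero.
Proof.
  apply (badd_cancel (bscal a bzero)). rewrite <- bscal_distr_l, !badd_zero. reflexivity.
Qed.

Lemma bopp_scal x : bopp x = bscal (-1) x.
Proof.
  apply (badd_cancel x). rewrite badd_opp.
  rewrite <- (bscal_one x) at 1. rewrite <- bscal_distr_r, Rplus_opp_r, bscal_zero_l. reflexivity.
Qed.

Lemma bnorm0 : bnorm (@bzero X) = 0.
Proof. rewrite <- (bscal_zero_r 0), bnorm_scal, Rabs_R0. ring. Qed.

Lemma bnorm_opp x : bnorm (bopp x) = bnorm x.
Proof. rewrite bopp_scal, bnorm_scal. replace (Rabs (-1)) with 1. ring. rewrite Rabs_left; lra. Qed.

Lemma bnorm_nonneg x : 0 <= bnorm x.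
Proof.
  pose proof (bnorm_triangle x (bopp x)) as H. rewrite badd_opp, bnorm0, bnorm_opp in H. lra.
Qed.

Lemma bsub_self x : bsub x x = bzero.
Proof. apply badd_opp. Qed.

Lemma bsub_eq0 x y : bnorm (bsub x y) = 0 -> x = y.
Proof.
  intros H. apply bnorm_zero in H. unfold bsub in H.
  apply (badd_cancel (bopp y)). rewrite (badd_comm (bopp y) y), badd_opp, badd_comm. exact H.
Qed.

Lemma bsub_tri x y z : bnorm (bsub x z) <= bnorm (bsub x y) + bnorm (bsub y z).
Proof.
  replace (bsub x z) with (badd (bsub x y) (bsub y z)); [apply bnorm_triangle|].
  unfold bsub. rewrite badd_assoc. f_equal.
  rewrite <- badd_assoc, (badd_comm (bopp y) y), badd_opp, badd_zero. reflexivity.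
Qed.

Lemma bopp_add x y : bopp (badd x y) = badd (bopp x) (bopp y).
Proof. rewrite !bopp_scal. apply bscal_distr_l. Qed.

Lemma bsub_sym x y : bnorm (bsub x y) = bnorm (bsub y x).
Proof.
  replace (bsub y x) with (bopp (bsub x y)); [symmetry; apply bnorm_opp|].
  unfold bsub. rewrite bopp_add, !bopp_scal, bscal_assoc.
  replace (-1 * -1) with 1 by ring. rewrite bscal_one. apply badd_comm.
Qed.

Lemma bnorm_sub_le x y : bnorm (bsub x y) <= bnorm x + bnorm y.
Proof. unfold bsub. rewrite <- (bnorm_opp y). apply bnorm_triangle. Qed.

Lemma bsub_add (a b c d : X) : bsub (badd a b) (badd c d) = badd (bsub a c) (bsub b d).
Proof.
  unfold bsub. rewrite bopp_add, !badd_assoc. f_equal. rewrite <- !badd_assoc. f_equal. apply badd_comm.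
Qed.

Lemma bsub_scal a (x y : X) : bsub (bscal a x) (bscal a y) = bscal a (bsub x y).
Proof.
  unfold bsub. rewrite bscal_distr_l, !bopp_scal, !bscal_assoc. f_equal. f_equal. ring.
Qed.

Lemma bsub_scal2 a b (x : X) : bsub (bscal a x) (bscal b x) = bscal (a - b) x.
Proof.
  unfold bsub. rewrite bopp_scal, bscal_assoc, <- bscal_distr_r. f_equal. ring.
Qed.

End BanachLemmas.

Lemma small_inv (eps : R) : 0 < eps -> exists N : nat, / (INR N + 1) < eps.
Proof.
  intros He. destruct (archimed_cor1 eps He) as [N [HN HN0]]. exists N.
  apply lt_0_INR in HN0. eapply Rle_lt_trans; [|exact HN].
  apply Rlt_le, Rinv_lt_contravar; nra.
Qed.

Lemma frac_bound c eps : 0 <= c -> 0 < eps -> eps / (c + 1) * c < eps.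
Proof.
  intros Hc He. apply (Rmult_lt_reg_r (c + 1)); [lra|]. unfold Rdiv.
  replace (eps * / (c + 1) * c * (c + 1)) with (eps * c) by (field; lra). nra.
Qed.

Fixpoint lmax {A : Type} (g : A -> R) (l : list A) : R :=
  match l with nil => 0 | a :: l' => Rmax (g a) (lmax g l') end.

Lemma lmax_ge {A : Type} (g : A -> R) (l : list A) a : In a l -> g a <= lmax g l.
Proof.
  induction l as [|b l IH]; simpl; [tauto|]. intros [->|H].
  - apply Rmax_l.
  - eapply Rle_trans; [apply IH; auto | apply Rmax_r].
Qed.

Lemma lmax_nonneg {A : Type} (g : A -> R) (l : list A) : 0 <= lmax g l.
Proof.
  induction l as [|b l IH]; simpl; [lra|]. eapply Rle_trans; [apply IH|apply Rmax_r].
Qed.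

Lemma zorn_subsets (T : Type) (P : (T -> Prop) -> Prop) :
  (forall F : (T -> Prop) -> Prop, (forall G, F G -> P G) ->
     (forall s t, F s -> F t -> (forall x, s x -> t x) \/ (forall x, t x -> s x)) ->
     P (fun x => exists G, F G /\ G x)) ->
  exists A, P A /\ forall B, (forall x, A x -> B x) -> ~ (forall x, B x -> A x) -> ~ P B.
Proof.
  intros H. destruct (@classical_sets.Zorn_bigcup T P) as [A [PA HA]].
  - intros F FP Ft. specialize (H F FP Ft). unfold classical_sets.bigcup.
    replace (fun x => exists2 G, F G & G x) with (fun x => exists G, F G /\ G x); [exact H|].
    extensionality x; apply propositional_extensionality; split.
    + intros [G [h1 h2]]; exists G; auto.
    + intros [G h1 h2]; exists G; auto.
  - exists A; split; auto. intros B h1 h2. apply HA. split; auto.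
Qed.

Lemma chain_finite_bound (T : Type) (F : (T -> Prop) -> Prop) :
  (forall s t, F s -> F t -> (forall x, s x -> t x) \/ (forall x, t x -> s x)) ->
  forall l : list (T -> Prop), exists G, (G = (fun _ => False) \/ F G) /\
    forall U, In U l -> F U -> forall x, U x -> G x.
Proof.
  intros Htot l. induction l as [|U l [G [HG HGl]]].
  - exists (fun _ => False). split; [left; auto|]. intros U [].
  - destruct (classic (F U)) as [FU|nFU].
    + assert (Hc : exists G', F G' /\ (forall x, G x -> G' x) /\ (forall x, U x -> G' x)).
      { destruct HG as [->|FG].
        - exists U. split; [auto|]. split; [intros x []|auto].
        - destruct (Htot G U FG FU) as [S|S]; [exists U | exists G]; auto. }
      destruct Hc as [G' [FG' [S1 S2]]]. exists G'. split; [right; auto|].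
      intros V [<-|HV] FV x Vx; [auto | apply S1; eapply HGl; eauto].
    + exists G. split; [exact HG|]. intros V [<-|HV] FV; [contradiction|exact (HGl V HV FV)].
Qed.

Section TopLemmas.
Context {Z : TopSpace}.

Lemma open_local (S : Z -> Prop) :
  (forall x, S x -> exists U, is_open U /\ U x /\ forall z, U z -> S z) -> is_open S.
Proof.
  intros H.
  replace S with (fun x => exists U, (is_open U /\ forall z, U z -> S z) /\ U x).
  - apply open_union. intros U [HU _]; exact HU.
  - extensionality x; apply propositional_extensionality; split.
    + intros [U [[_ HS] Ux]]. auto.
    + intros Sx. destruct (H x Sx) as [U [HU [Ux HS]]]. exists U; auto.
Qed.

Lemma compact_pts (rho : Z -> Z -> Prop) : top_compact Z ->
  (forall z, is_open (rho z)) -> (forall z, rho z z) ->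
  exists l : list Z, forall x, exists z, In z l /\ rho z x.
Proof.
  intros HC Ho Hz.
  destruct (HC (fun U => exists z, U = rho z)) as [l [Hl Hcov]].
  - intros U [z ->]; auto.
  - intros x. exists (rho x); split; [exists x; reflexivity | auto].
  - assert (Hlp : exists lp, forall U, In U l -> exists z, In z lp /\ U = rho z).
    { clear Hcov. induction l as [|U l IH].
      - exists nil. intros U [].
      - inversion Hl as [|? ? [z Ez] Hl']; subst. destruct (IH Hl') as [lp Hlp].
        exists (z :: lp). intros U' [<-|HU'].
        + exists z; split; [left|]; auto.
        + destruct (Hlp U' HU') as [z' [? ?]]. exists z'; split; [right|]; auto. }
    destruct Hlp as [lp Hlp]. exists lp. intros x.
    destruct (Hcov x) as [U [HU Ux]]. destruct (Hlp U HU) as [z [Hz' ->]]. eauto.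
Qed.

Lemma open_finite (k : Z) (P : nat -> Z -> Prop) (N : nat) :
  (forall n, (n < N)%nat -> exists U, is_open U /\ U k /\ forall z, U z -> P n z) ->
  exists U, is_open U /\ U k /\ forall z, U z -> forall n, (n < N)%nat -> P n z.
Proof.
  induction N as [|N IH]; intros H.
  - exists (fun _ => True). split; [apply open_full|]. split; auto. intros; lia.
  - destruct IH as [U [HU [Uk HUP]]]. { intros n Hn. apply H. lia. }
    destruct (H N ltac:(lia)) as [V [HV [Vk HVP]]].
    exists (fun x => U x /\ V x). split; [apply open_inter; auto|]. split; auto.
    intros z [Uz Vz] n Hn. destruct (Nat.eq_dec n N) as [->|Hne]; auto.
    apply HUP; auto. lia.
Qed.

Lemma cont_bounded {X : Banach} (f : Z -> X) : top_compact Z -> continuous f ->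
  exists M, forall z, bnorm (f z) <= M.
Proof.
  intros HC Hf.
  set (rho := fun z w => exists U, is_open U /\ U w /\ forall t, U t -> bnorm (bsub (f t) (f z)) < 1).
  destruct (compact_pts rho HC) as [l Hl].
  - intros z. apply open_local. intros w [U [HU [Uw HUt]]]. exists U; split; auto; split; auto.
    intros t Ut. exists U; auto.
  - intros z. destruct (Hf z 1 ltac:(lra)) as [U [HU [Uz HUt]]]. exists U; auto.
  - exists (lmax (fun z => bnorm (f z) + 1) l). intros w.
    destruct (Hl w) as [z [Hz [U [HU [Uw HUt]]]]].
    pose proof (lmax_ge (fun z => bnorm (f z) + 1) l z Hz) as Hm. simpl in Hm.
    specialize (HUt w Uw). pose proof (bnorm_triangle (bsub (f w) (f z)) (f z)) as Ht.
    replace (badd (bsub (f w) (f z)) (f z)) with (f w) in Ht; [lra|].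
    unfold bsub. rewrite <- badd_assoc, (badd_comm _ (f z)), badd_opp, badd_zero. reflexivity.
Qed.

End TopLemmas.

Section Sup.
Context {Z : TopSpace} {X : Banach}.

Lemma supnorm_exists (f : Z -> X) (M : R) : (forall z, bnorm (f z) <= M) -> exists s, is_supnorm f s.
Proof.
  intros HM.
  destruct (completeness (fun r => r = 0 \/ exists k, r = bnorm (f k))) as [m Hm].
  - exists (Rmax 0 M). intros r [->|[k ->]]. apply Rmax_l. eapply Rle_trans; [apply HM|apply Rmax_r].
  - exists 0; auto.
  - exists m; exact Hm.
Qed.

Lemma supnorm_ge (f : Z -> X) s k : is_supnorm f s -> bnorm (f k) <= s.
Proof. intros [H _]. apply H. right; eauto. Qed.

End Sup.

Lemma supnorm_transfer {Z Z' : TopSpace} {X : Banach} (f : Z -> X) (g : Z' -> X) s :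
  (forall k, exists k', g k = f k') -> (forall k', exists k, f k' = g k) ->
  is_supnorm f s -> is_supnorm g s.
Proof.
  intros H1 H2 [Hu Hl]. split.
  - intros r [->|[k ->]]. apply Hu; left; auto. destruct (H1 k) as [k' ->]. apply Hu; right; eauto.
  - intros b Hb. apply Hl. intros r [->|[k' ->]]. apply Hb; left; auto.
    destruct (H2 k') as [k ->]. apply Hb; right; eauto.
Qed.

Section MetricSpace.
Variables (M : Type) (d : M -> M -> R).

Definition mopen (U : M -> Prop) : Prop :=
  forall x, U x -> exists r, 0 < r /\ forall z, d x z < r -> U z.

Lemma mopen_full : mopen (fun _ => True).
Proof. intros x _. exists 1; split; auto; lra. Qed.

Lemma mopen_inter U V : mopen U -> mopen V -> mopen (fun x => U x /\ V x).
Proof.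
  intros HU HV x [Ux Vx]. destruct (HU x Ux) as [r1 [Hr1 H1]]. destruct (HV x Vx) as [r2 [Hr2 H2]].
  exists (Rmin r1 r2). split; [apply Rmin_pos; auto|]. intros z Hz.
  pose proof (Rmin_l r1 r2); pose proof (Rmin_r r1 r2). split; [apply H1|apply H2]; lra.
Qed.

Lemma mopen_union (F : (M -> Prop) -> Prop) :
  (forall U, F U -> mopen U) -> mopen (fun x => exists U, F U /\ U x).
Proof.
  intros H x [U [FU Ux]]. destruct (H U FU x Ux) as [r [Hr HUr]]. exists r; split; auto.
  intros z Hz. exists U; split; auto.
Qed.

Definition metric_top : TopSpace := {| pt := M; is_open := mopen; open_full := mopen_full;
  open_inter := mopen_inter; open_union := mopen_union |}.

Definition mclosed (P : M -> Prop) : Prop := mopen (fun x => ~ P x).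

Definition mscattered : Prop :=
  forall P, mclosed P -> (exists x, P x) ->
    exists a, P a /\ exists r, 0 < r /\ forall x, P x -> d a x < r -> x = a.

Section Countability.
Variable beta : nat -> M -> Prop.
Hypothesis beta_open : forall i, mopen (beta i).
Hypothesis beta_base : forall a r, 0 < r -> exists i, beta i a /\ forall z, beta i z -> d a z < r.
Hypothesis Hscat : mscattered.

Definition countable_set (S : M -> Prop) : Prop :=
  exists f : M -> nat, forall y z, S y -> S z -> f y = f z -> y = z.

Definition locally_countable (x : M) : Prop := exists i, beta i x /\ countable_set (beta i).

Definition base_code (i : nat) : M -> nat :=
  match excluded_middle_informative (countable_set (beta i)) with
  | left H => proj1_sig (constructive_indefinite_description _ H)
  | right _ => fun _ => 0%nat end.

Lemma base_code_inj i : countable_set (beta i) ->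
  forall y z, beta i y -> beta i z -> base_code i y = base_code i z -> y = z.
Proof.
  intros H. unfold base_code. destruct excluded_middle_informative as [H'|H']; [|contradiction].
  destruct constructive_indefinite_description as [f Hf]. simpl. exact Hf.
Qed.

Definition base_index (y : M) : nat :=
  match excluded_middle_informative (locally_countable y) with
  | left H => proj1_sig (constructive_indefinite_description _ H)
  | right _ => 0%nat end.

Lemma base_index_spec y : locally_countable y ->
  beta (base_index y) y /\ countable_set (beta (base_index y)).
Proof.
  intros H. unfold base_index. destruct excluded_middle_informative as [H'|H']; [|contradiction].
  destruct constructive_indefinite_description as [i Hi]. exact Hi.
Qed.

(* A set all of whose points but one are locally countable is countable: code y by the
   pair (index of a countable basic neighbourhood of y, code of y inside it). *)
Lemma countable_of_locally_countable (A : M -> Prop) (a : M) :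
  (forall y, A y -> y = a \/ locally_countable y) -> countable_set A.
Proof.
  intros HS.
  exists (fun y => match excluded_middle_informative (y = a) with left _ => 0%nat
                  | right _ => S (to_nat (base_index y, base_code (base_index y) y)) end).
  intros y z Ay Az.
  destruct (excluded_middle_informative (y = a)) as [Ey|Ey];
  destruct (excluded_middle_informative (z = a)) as [Ez|Ez]; intros E; try congruence.
  apply Nat.succ_inj, (f_equal of_nat) in E. rewrite !cancel_of_to in E. injection E as E1 E2.
  destruct (HS y Ay) as [?|Cy]; [contradiction|]. destruct (HS z Az) as [?|Cz]; [contradiction|].
  destruct (base_index_spec y Cy) as [By Cny]. destruct (base_index_spec z Cz) as [Bz Cnz].
  rewrite E1 in By, Cny, E2. exact (base_code_inj (base_index z) Cnz y z By Bz E2).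
Qed.

(* The non-locally-countable points form a closed set; an isolated point of it would be
   locally countable, so it is empty. *)
Lemma all_locally_countable x : locally_countable x.
Proof.
  apply NNPP. intros Hx.
  destruct (Hscat (fun x => ~ locally_countable x)) as [a [Pa [r [Hr Hiso]]]].
  - intros y Hy. apply NNPP in Hy. destruct Hy as [i [Bi Ci]].
    destruct (beta_open i y Bi) as [r [Hr Hb]]. exists r; split; auto.
    intros z Hz Hn. apply Hn. exists i; auto.
  - exists x; auto.
  - destruct (beta_base a r Hr) as [i [Bia Hi]]. apply Pa. exists i. split; auto.
    apply (countable_of_locally_countable (beta i) a). intros y By.
    destruct (classic (locally_countable y)) as [HC|Hn]; [right; exact HC|].
    left. apply Hiso; auto.
Qed.

Lemma scattered_second_countable : countable metric_top.
Proof.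
  destruct (classic (exists a : M, True)) as [[a _]|Hn].
  - destruct (countable_of_locally_countable (fun _ => True) a) as [f Hf].
    { intros y _; right; apply all_locally_countable. }
    exists f. intros x y E. apply Hf; auto.
  - exists (fun _ => 0%nat). intros x. exfalso; apply Hn; exists x; auto.
Qed.

End Countability.

Hypothesis Hd : is_metric d.

Lemma d_nonneg x y : 0 <= d x y.
Proof. apply Hd. Qed.

Lemma d_eq0 x y : d x y = 0 -> x = y.
Proof. apply Hd. Qed.

Lemma d_refl x : d x x = 0.
Proof. apply Hd. reflexivity. Qed.

Lemma d_sym x y : d x y = d y x.
Proof. apply Hd. Qed.

Lemma d_tri x y z : d x z <= d x y + d y z.
Proof. apply Hd. Qed.

Lemma d_pos x y : x <> y -> 0 < d x y.
Proof.
  intros Hxy. destruct (Rle_lt_or_eq_dec _ _ (d_nonneg x y)) as [?|E]; [auto|].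
  exfalso; apply Hxy, d_eq0; auto.
Qed.

Lemma ball_open (c : M) (r : R) : mopen (fun z => d c z < r).
Proof.
  intros x Hx. exists (r - d c x). split; [lra|]. intros z Hz.
  pose proof (d_tri c x z). lra.
Qed.

Lemma metric_top_metrizable : metrizable metric_top.
Proof. exists d. split; [exact Hd|]. intros U. simpl. unfold mopen. tauto. Qed.
End MetricSpace.
Arguments mopen {M} d U. Arguments metric_top {M} d. Arguments mclosed {M} d P.
Arguments mscattered {M} d.
Arguments d_nonneg {M d} Hd x y. Arguments d_eq0 {M d} Hd x y. Arguments d_refl {M d} Hd x.
Arguments d_sym {M d} Hd x y. Arguments d_tri {M d} Hd x y z. Arguments d_pos {M d} Hd x y.
Arguments ball_open {M d} Hd c r.

Section Image.
Variables (K : TopSpace) (M : Type) (d : M -> M -> R) (q : K -> M).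
Hypothesis Hd : is_metric d.
Hypothesis HKc : top_compact K.
Hypothesis q_surj : forall x, exists k, x = q k.
Hypothesis q_cont : forall k eps, 0 < eps ->
  exists U, is_open U /\ U k /\ forall z, U z -> d (q k) (q z) < eps.

Lemma preimage_open (U : M -> Prop) : mopen d U -> is_open (fun k => U (q k)).
Proof.
  intros HU. apply open_local. intros k Uk. destruct (HU (q k) Uk) as [r [Hr Hb]].
  destruct (q_cont k r Hr) as [V [HV [Vk HVd]]]. exists V; split; auto.
Qed.

Lemma fiber_compl_open (a : M) : is_open (fun k => q k <> a).
Proof.
  apply (preimage_open (fun x => x <> a)). intros x Hx. exists (d x a).
  split; [apply (d_pos Hd); auto|]. intros z Hz ->. lra.
Qed.

Lemma image_compact : top_compact (metric_top d).
Proof.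
  intros F HF Hcov.
  set (Uk := fun k : K => proj1_sig (constructive_indefinite_description _ (Hcov (q k)))).
  assert (HUk : forall k, F (Uk k) /\ Uk k (q k)).
  { intros k. unfold Uk. destruct constructive_indefinite_description; auto. }
  destruct (compact_pts (fun k z => Uk k (q z)) HKc) as [l Hl].
  - intros k. apply preimage_open. apply HF, HUk.
  - intros k. apply HUk.
  - exists (map Uk l). split.
    + apply Forall_forall. intros U HU. apply in_map_iff in HU. destruct HU as [k [<- _]]. apply HUk.
    + intros x. destruct (q_surj x) as [z ->]. destruct (Hl z) as [k [Hk Hkz]].
      exists (Uk k). split; auto. apply in_map; auto.
Qed.

(* The image of a closed set C of K is closed: a point outside it is at positive
   distance from it. *)
Lemma image_closed (C : K -> Prop) : is_open (fun k => ~ C k) -> forall x : M,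
  ~ (exists k, C k /\ q k = x) -> exists r, 0 < r /\ forall k, C k -> r <= d x (q k).
Proof.
  intros HC x Hx.
  set (dl := fun k => d x (q k)).
  assert (Hdl : forall k, C k -> 0 < dl k).
  { intros k Ck. apply (d_pos Hd). intros E. apply Hx. exists k. auto. }
  set (rho := fun k z => (C k /\ d (q k) (q z) < dl k / 2) \/ (~ C k /\ ~ C z)).
  destruct (compact_pts rho HKc) as [l Hl].
  - intros k. apply open_local. intros z [[Ck Hz]|[nCk nCz]].
    + destruct (q_cont z (dl k / 2 - d (q k) (q z))) as [V [HV [Vz HVd]]]; [lra|].
      exists V; split; auto; split; auto. intros t Vt. left. split; auto.
      pose proof (d_tri Hd (q k) (q z) (q t)). specialize (HVd t Vt). lra.
    + exists (fun k => ~ C k). split; auto. split; auto. intros t nCt. right; auto.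
  - intros k. destruct (classic (C k)) as [Ck|nCk].
    + left. split; auto. rewrite (d_refl Hd). specialize (Hdl k Ck). lra.
    + right; auto.
  - set (Mx := lmax (fun k => 2 / dl k) l).
    assert (HM : 0 <= Mx) by apply lmax_nonneg.
    exists (/ (Mx + 1)). split; [apply Rinv_0_lt_compat; lra|].
    intros k Ck. destruct (Hl k) as [z [Hz [[Cz Hzk]|[_ nCk]]]]; [|contradiction].
    pose proof (lmax_ge (fun k => 2 / dl k) l z Hz) as Hm. simpl in Hm. fold Mx in Hm.
    assert (Hr : / (Mx + 1) < dl z / 2).
    { specialize (Hdl z Cz). unfold Rdiv in *.
      assert (2 < (Mx + 1) * dl z).
      { apply (Rmult_le_compat_r (dl z)) in Hm; [|lra].
        rewrite Rmult_assoc, Rinv_l in Hm; lra. }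
      apply (Rmult_lt_reg_r (Mx + 1)); [lra|]. rewrite Rinv_l; lra. }
    pose proof (d_tri Hd x (q k) (q z)) as H2. unfold dl in *.
    rewrite (d_sym Hd (q k) (q z)) in H2. lra.
Qed.

Definition misses_fibres (P : M -> Prop) (G : K -> Prop) : Prop :=
  is_open G /\ forall a, P a -> exists k, ~ G k /\ q k = a.

(* Unions of chains of such sets keep missing the fibres, by compactness of K. *)
Lemma misses_fibres_chain (P : M -> Prop) (F : (K -> Prop) -> Prop) :
  (forall G, F G -> misses_fibres P G) ->
  (forall s t, F s -> F t -> (forall x, s x -> t x) \/ (forall x, t x -> s x)) ->
  misses_fibres P (fun x => exists G, F G /\ G x).
Proof.
  intros HF Htot. split.
  - apply open_union. intros G FG. apply (HF G FG).
  - intros a Pa. apply NNPP. intros Hno.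
    destruct (HKc (fun U => U = (fun k => q k <> a) \/ F U)) as [l [Hl Hlc]].
    + intros U [->|FU]; [apply fiber_compl_open | apply (HF U FU)].
    + intros k. destruct (classic (q k = a)) as [E|E].
      * destruct (classic (exists G, F G /\ G k)) as [[G [FG Gk]]|HnG].
        -- exists G. auto.
        -- exfalso. apply Hno. exists k. auto.
      * exists (fun k => q k <> a). auto.
    + destruct (chain_finite_bound K F Htot l) as [Gm [HGm HGml]].
      assert (Hk : exists k, ~ Gm k /\ q k = a).
      { destruct HGm as [->|FG].
        - destruct (q_surj a) as [k ->]. exists k; auto.
        - apply (HF Gm FG); auto. }
      destruct Hk as [k [nGk Ek]]. destruct (Hlc k) as [U [HU Uk]].
      destruct (proj1 (Forall_forall _ l) Hl U HU) as [->|FU]; [contradiction|].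
      apply nGk, (HGml U HU FU k Uk).
Qed.

(* Take G maximal among open sets missing the
   fibres over a closed nonempty P (Zorn).  An isolated point k0 of the remaining closed
   set, with neighbourhood V, cannot be added to G: some fibre over a in P lies in G u V,
   forcing a = q k0; the rest of P comes from a closed set avoiding a, hence a is
   isolated in P. *)
Lemma image_scattered : scattered K -> mscattered d.
Proof.
  intros HKs P HPc [x0 Px0].
  assert (HPq : is_open (fun k => ~ P (q k))) by exact (preimage_open (fun x => ~ P x) HPc).
  destruct (zorn_subsets K (misses_fibres P) (misses_fibres_chain P)) as [G [[HGo HGf] HGmax]].
  assert (HF0 : exists k, P (q k) /\ ~ G k).
  { destruct (HGf x0 Px0) as [k [nGk Ek]]; exists k; rewrite Ek; auto. }
  destruct (HKs (fun k => P (q k) /\ ~ G k) HF0) as [k0 [[Pk0 nGk0] [V [HV [Vk0 HVi]]]]].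
  set (G' := fun k => G k \/ V k).
  assert (HG'o : is_open G').
  { apply open_local. intros k [Gk|Vk]; [exists G | exists V]; unfold G'; auto. }
  assert (Ha : exists a, P a /\ forall k, q k = a -> G' k).
  { apply NNPP. intros Hn. apply (HGmax G'); [intros k Gk; left; auto| |].
    - intros Hsub. apply nGk0, Hsub. right; auto.
    - split; auto. intros a Pa. apply NNPP. intros Hn2. apply Hn. exists a. split; auto.
      intros k Hk. apply NNPP. intros nG'k. apply Hn2. exists k; auto. }
  destruct Ha as [a [Pa Hak]].
  assert (Eak : a = q k0).
  { destruct (HGf a Pa) as [k1 [nGk1 Ek1]].
    destruct (Hak k1 Ek1) as [?|Vk1]; [contradiction|]. rewrite <- Ek1. f_equal.
    apply HVi; auto. rewrite Ek1; auto. }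
  set (C := fun k => P (q k) /\ ~ G' k).
  assert (HCo : is_open (fun k => ~ C k)).
  { apply open_local. intros k nCk. destruct (classic (P (q k))) as [Pk|nPk].
    - assert (G'k : G' k) by (apply NNPP; intros Hn; apply nCk; split; auto).
      exists G'. split; [auto|]. split; [auto|]. intros z G'z [_ Hz]. contradiction.
    - exists (fun k => ~ P (q k)). split; [auto|]. split; [auto|]. intros z Hz [Pz _]. contradiction. }
  destruct (image_closed C HCo a) as [r [Hr HCr]].
  { intros [k [[_ nG'k] Ek]]. apply nG'k, Hak, Ek. }
  exists a. split; auto. exists r; split; auto. intros x Px Hx.
  destruct (HGf x Px) as [k2 [nGk2 Ek2]].
  destruct (classic (V k2)) as [Vk2|nVk2].
  - rewrite <- Ek2, Eak. f_equal. apply HVi; auto. rewrite Ek2; auto.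
  - assert (HC2 : C k2).
    { split; [rewrite Ek2; auto|]. intros [?|?]; contradiction. }
    specialize (HCr k2 HC2). rewrite Ek2 in HCr. lra.
Qed.

Lemma net_exists (eps : R) : 0 < eps ->
  exists l : list K, forall x : M, exists k, In k l /\ d (q k) x < eps.
Proof.
  intros He. destruct (compact_pts (fun k z => d (q k) (q z) < eps) HKc) as [l Hl].
  - intros k. apply (preimage_open (fun z => d (q k) z < eps)). apply (ball_open Hd).
  - intros k. rewrite (d_refl Hd). exact He.
  - exists l. intros x. destruct (q_surj x) as [z ->]. auto.
Qed.

Definition net (m : nat) : list K :=
  proj1_sig (constructive_indefinite_description _
    (net_exists (/ (INR m + 1)) (RinvN_pos m))).

Lemma net_spec m x : exists k, In k (net m) /\ d (q k) x < / (INR m + 1).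
Proof. unfold net. destruct constructive_indefinite_description; auto. Qed.

Definition net_ball (i : nat) (z : M) : Prop :=
  exists k, nth_error (net (fst (of_nat i))) (snd (of_nat i)) = Some k /\
    d (q k) z < / (INR (fst (of_nat i)) + 1).

Lemma net_ball_open i : mopen d (net_ball i).
Proof.
  intros x [k [Hk Hdk]]. exists (/ (INR (fst (of_nat i)) + 1) - d (q k) x). split; [lra|].
  intros z Hz. exists k. split; auto. pose proof (d_tri Hd (q k) x z). lra.
Qed.

Lemma net_ball_base a r : 0 < r -> exists i, net_ball i a /\ forall z, net_ball i z -> d a z < r.
Proof.
  intros Hr. destruct (small_inv (r / 2)) as [m Hm]; [lra|].
  destruct (net_spec m a) as [k [Hk Hdk]]. destruct (In_nth_error _ _ Hk) as [j Hj].
  exists (to_nat (m, j)). unfold net_ball. rewrite cancel_of_to. simpl. split.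
  - exists k; auto.
  - intros z [k' [Hk' Hd']]. rewrite Hj in Hk'. injection Hk' as <-.
    pose proof (d_tri Hd a (q k) z) as H1. rewrite (d_sym Hd a (q k)) in H1. lra.
Qed.

Lemma image_countable : scattered K -> countable (metric_top d).
Proof.
  intros HKs. apply (scattered_second_countable M d net_ball net_ball_open net_ball_base).
  apply image_scattered; exact HKs.
Qed.

Lemma compose_embedding (X : Banach) (X0 : X -> Prop) :
  embeds_C_into_C (metric_top d) X X0 K X (fun _ => True).
Proof.
  exists (fun f k => f (q k)), 1, 1. split; [lra|]. split; [lra|]. split; [|split].
  - intros f [Hf _]. split; auto. intros k eps He.
    destruct (Hf (q k) eps He) as [U [HU [Uk HUt]]].
    exists (fun z => U (q z)). split; [apply preimage_open; exact HU|]. split; auto.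
  - intros a f g _ _ k. reflexivity.
  - intros f [Hf _]. destruct (cont_bounded f image_compact Hf) as [Mf HM].
    destruct (supnorm_exists f Mf HM) as [s Hs]. exists s, s. split; auto. split.
    + apply (supnorm_transfer f); auto.
      * intros k. exists (q k). reflexivity.
      * intros x. destruct (q_surj x) as [k ->]. exists k. reflexivity.
    + lra.
Qed.

End Image.

Definition coef (b : bool) (z p : nat) : R := (if b then -1 else 1) * (INR z / (INR p + 1)).

Lemma rat_approx t eps : 0 < eps -> exists b z p, Rabs (t - coef b z p) < eps.
Proof.
  intros He. destruct (small_inv eps He) as [p Hp].
  pose proof (pos_INR p) as Hp0.
  assert (Hfl : exists z : nat, INR z <= Rabs t * (INR p + 1) < INR z + 1).
  { destruct (archimed (Rabs t * (INR p + 1))) as [H1 H2].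
    assert (0 <= Rabs t * (INR p + 1)) by (pose proof (Rabs_pos t); nra).
    assert (Hup : (0 < up (Rabs t * (INR p + 1)))%Z) by (apply lt_IZR; lra).
    exists (Z.to_nat (up (Rabs t * (INR p + 1)) - 1)).
    rewrite INR_IZR_INZ, Z2Nat.id by lia. rewrite minus_IZR. simpl. lra. }
  destruct Hfl as [z [Hz1 Hz2]].
  assert (Hq : Rabs (Rabs t - INR z / (INR p + 1)) < eps).
  { apply Rabs_def1; apply (Rmult_lt_reg_r (INR p + 1)); try lra;
      unfold Rdiv; rewrite Rmult_minus_distr_r, Rmult_assoc, Rinv_l by lra.
    - apply Rlt_trans with 1; [lra|].
      apply (Rmult_lt_compat_r (INR p + 1)) in Hp; [|lra]. rewrite Rinv_l in Hp; lra.
    - pose proof (Rabs_pos t). apply (Rmult_lt_compat_r (INR p + 1)) in He; [|lra]. nra. }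
  destruct (Rle_or_lt 0 t) as [Ht|Ht].
  - exists false, z, p. unfold coef. rewrite (Rabs_pos_eq t) in Hq by lra. rewrite Rmult_1_l. exact Hq.
  - exists true, z, p. unfold coef. rewrite (Rabs_left t) in Hq by lra.
    replace (t - -1 * (INR z / (INR p + 1))) with (- (- t - INR z / (INR p + 1))) by ring.
    rewrite Rabs_Ropp. exact Hq.
Qed.

(* Finite lists of (rational coefficient, index) pairs are coded by natural numbers. *)
Module ListCode.
Import ssreflect choice.
Definition decode (n : nat) : option (list (bool * nat * nat * nat)) := unpickle n.
Lemma decode_onto l : exists n, decode n = Some l.
Proof. exists (pickle l). apply: pickleK. Qed.
End ListCode.

Section RationalSpan.
Context {X : Banach}.
Variable D : nat -> X.

Fixpoint eval (l : list (bool * nat * nat * nat)) : X :=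
  match l with
  | nil => bzero
  | (b, z, p, i) :: l' => badd (bscal (coef b z p) (D i)) (eval l')
  end.

Definition rat_comb (n : nat) : X :=
  match ListCode.decode n with Some l => eval l | None => bzero end.

Lemma rat_comb_eval n : exists l, rat_comb n = eval l.
Proof. unfold rat_comb. destruct (ListCode.decode n) as [l|]; [exists l | exists nil]; auto. Qed.

Lemma eval_rat_comb l : exists n, rat_comb n = eval l.
Proof. destruct (ListCode.decode_onto l) as [n Hn]. exists n. unfold rat_comb. rewrite Hn. auto. Qed.

Lemma eval_app l1 l2 : eval (l1 ++ l2) = badd (eval l1) (eval l2).
Proof.
  induction l1 as [|[[[b z] p] i] l1 IH]; simpl.
  - rewrite badd_zero_l; auto.
  - rewrite IH, badd_assoc. auto.
Qed.

Lemma scal_approx a l eps : 0 < eps -> exists l', bnorm (bsub (bscal a (eval l)) (eval l')) < eps.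
Proof.
  revert eps. induction l as [|[[[b z] p] i] l IH]; intros eps He; simpl.
  - exists nil. simpl. rewrite bscal_zero_r, bsub_self, bnorm0. auto.
  - pose proof (bnorm_nonneg (D i)) as HD.
    destruct (rat_approx (a * coef b z p) (eps / 2 / (bnorm (D i) + 1))) as [b' [z' [p' Hc]]].
    { apply Rdiv_lt_0_compat; lra. }
    destruct (IH (eps / 2)) as [l'' Hl'']; [lra|].
    exists ((b', z', p', i) :: l''). simpl.
    rewrite bscal_distr_l, bscal_assoc, bsub_add.
    eapply Rle_lt_trans; [apply bnorm_triangle|].
    rewrite bsub_scal2, bnorm_scal.
    assert (Rabs (a * coef b z p - coef b' z' p') * bnorm (D i) < eps / 2).
    { apply Rle_lt_trans with (eps / 2 / (bnorm (D i) + 1) * bnorm (D i)).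
      - apply Rmult_le_compat_r; lra.
      - apply frac_bound; lra. }
    lra.
Qed.

Definition span_closure (x : X) : Prop :=
  forall eps, 0 < eps -> exists n, bnorm (bsub x (rat_comb n)) < eps.

Lemma span_closure_approx x :
  (forall eps, 0 < eps -> exists z, span_closure z /\ bnorm (bsub x z) < eps) -> span_closure x.
Proof.
  intros H eps He. destruct (H (eps / 2)) as [z [Hz Hxz]]; [lra|].
  destruct (Hz (eps / 2)) as [n Hn]; [lra|]. exists n.
  eapply Rle_lt_trans; [apply (bsub_tri _ z)|]. lra.
Qed.

Lemma span_closure_eval l : span_closure (eval l).
Proof.
  intros eps He. destruct (eval_rat_comb l) as [n Hn]. exists n.
  rewrite Hn, bsub_self, bnorm0. exact He.
Qed.

Lemma span_closure_D i : span_closure (D i).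
Proof.
  replace (D i) with (eval ((false, 1%nat, 0%nat, i) :: nil)); [apply span_closure_eval|].
  simpl. replace (coef false 1 0) with 1 by (unfold coef; simpl; field).
  rewrite bscal_one, badd_zero. reflexivity.
Qed.

Lemma span_closure_subspace : closed_subspace span_closure.
Proof.
  split; [|split; [|split]].
  - exact (span_closure_eval nil).
  - intros x y Hx Hy. apply span_closure_approx. intros eps He.
    destruct (Hx (eps / 2)) as [n1 H1]; [lra|]. destruct (Hy (eps / 2)) as [n2 H2]; [lra|].
    destruct (rat_comb_eval n1) as [l1 E1]. destruct (rat_comb_eval n2) as [l2 E2].
    exists (eval (l1 ++ l2)). split; [apply span_closure_eval|].
    rewrite eval_app, <- E1, <- E2, bsub_add.
    eapply Rle_lt_trans; [apply bnorm_triangle|]. lra.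
  - intros a x Hx. apply span_closure_approx. intros eps He. pose proof (Rabs_pos a).
    destruct (Hx (eps / (Rabs a + 1))) as [n1 H1]. { apply Rdiv_lt_0_compat; lra. }
    destruct (rat_comb_eval n1) as [l1 E1].
    exists (bscal a (eval l1)). split.
    + apply span_closure_approx. intros eps' He'.
      destruct (scal_approx a l1 eps' He') as [l' Hl']. exists (eval l').
      split; [apply span_closure_eval | exact Hl'].
    + rewrite bsub_scal, bnorm_scal, <- E1.
      apply Rle_lt_trans with (Rabs a * (eps / (Rabs a + 1))).
      * apply Rmult_le_compat_l; [lra|]. left; exact H1.
      * rewrite Rmult_comm. apply frac_bound; lra.
  - intros v l Hv Hl. apply span_closure_approx. intros eps He.
    destruct (Hl eps He) as [N HN]. exists (v N). split; [apply Hv|].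
    rewrite bsub_sym. apply HN. lia.
Qed.

Lemma span_closure_separable : separable_sub span_closure.
Proof.
  exists rat_comb. split.
  - intros n. destruct (rat_comb_eval n) as [l ->]. apply span_closure_eval.
  - intros x eps Hx He. exact (Hx eps He).
Qed.

End RationalSpan.

Section Construction.
Variables (K : TopSpace) (X Y : Banach).
Hypothesis HKc : top_compact K.
Variable u : nat -> Y.
Hypothesis Hu : forall (y : Y) eps, 0 < eps -> exists n, bnorm (bsub y (u n)) < eps.
Variable T : Y -> K -> X.
Variables A B : R.
Hypothesis HA : 0 < A.
Hypothesis HB : 0 < B.
Hypothesis HTc : forall y, in_CKX0 (fun _ : X => True) (T y).
Hypothesis HTl : forall a y1 y2 k, T (badd (bscal a y1) y2) k = badd (bscal a (T y1 k)) (T y2 k).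
Hypothesis HTn : forall y, exists s, is_supnorm (T y) s /\ A * bnorm y <= s /\ s <= B * bnorm y.

Lemma T_bound y k : bnorm (T y k) <= B * bnorm y.
Proof.
  destruct (HTn y) as [s [Hs [_ Hs2]]]. eapply Rle_trans; [eapply supnorm_ge; eauto | exact Hs2].
Qed.

Lemma T_diff y v k : bnorm (bsub (T y k) (T v k)) <= B * bnorm (bsub y v).
Proof.
  replace (bsub (T y k) (T v k)) with (T (bsub y v) k); [apply T_bound|].
  unfold bsub. rewrite !bopp_scal, badd_comm, HTl, badd_comm. reflexivity.
Qed.

Definition h (n : nat) : K -> X := T (u n).

Lemma h_dense y eps : 0 < eps -> exists n, forall k, bnorm (bsub (T y k) (h n k)) < eps.
Proof.
  intros He. destruct (Hu y (eps / B)) as [n Hn]. { apply Rdiv_lt_0_compat; lra. }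
  exists n. intros k. eapply Rle_lt_trans; [apply T_diff|].
  apply (Rmult_lt_compat_l B) in Hn; [|lra]. unfold Rdiv in Hn.
  rewrite (Rmult_comm eps), <- Rmult_assoc, Rinv_r, Rmult_1_l in Hn; lra.
Qed.

(* Weights making w n * |h n k - h n k'| <= 2/(n+1) uniformly in k, k'. *)
Definition w (n : nat) : R := / ((INR n + 1) * (B * bnorm (u n) + 1)).

Lemma w_pos n : 0 < w n.
Proof.
  unfold w. pose proof (pos_INR n). pose proof (bnorm_nonneg (u n)).
  assert (0 <= B * bnorm (u n)) by nra.
  apply Rinv_0_lt_compat. apply Rmult_lt_0_compat; nra.
Qed.

Lemma w_le1 n : w n <= 1.
Proof.
  unfold w. pose proof (pos_INR n). pose proof (bnorm_nonneg (u n)).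
  assert (0 <= B * bnorm (u n)) by nra.
  rewrite <- Rinv_1. apply Rinv_le_contravar; [lra|]. nra.
Qed.

Lemma w_term n k k' : w n * bnorm (bsub (h n k) (h n k')) <= 2 / (INR n + 1).
Proof.
  pose proof (pos_INR n). pose proof (bnorm_nonneg (u n)).
  set (s := B * bnorm (u n)). assert (0 <= s) by (unfold s; nra).
  assert (Hb : bnorm (bsub (h n k) (h n k')) <= 2 * s).
  { eapply Rle_trans; [apply bnorm_sub_le|]. unfold h.
    pose proof (T_bound (u n) k) as Hk. pose proof (T_bound (u n) k') as Hk'. fold s in Hk, Hk'. lra. }
  unfold w. fold s.
  apply (Rmult_le_reg_l ((INR n + 1) * (s + 1))); [nra|].
  rewrite <- Rmult_assoc, Rinv_r by nra. unfold Rdiv.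
  replace ((INR n + 1) * (s + 1) * (2 * / (INR n + 1))) with (2 * (s + 1)) by (field; lra).
  nra.
Qed.

(* The quotient space: the set of sequences (h n k)_n, with q k the sequence at k. *)
Definition pts := {phi : nat -> X | exists k, phi = fun n => h n k}.
Definition q (k : K) : pts := exist _ (fun n => h n k) (ex_intro _ k eq_refl).

Lemma q_surj (x : pts) : exists k, x = q k.
Proof.
  destruct x as [phi [k Hk]]. exists k. unfold q. subst phi. f_equal.
Qed.

Definition dset (x y : pts) : R -> Prop :=
  fun r => exists n, r = w n * bnorm (bsub (proj1_sig x n) (proj1_sig y n)).

Lemma dset_bound x y : bound (dset x y).
Proof.
  exists 2. intros r [n ->].
  destruct (q_surj x) as [k ->]. destruct (q_surj y) as [k' ->]. simpl.
  eapply Rle_trans; [apply w_term|]. pose proof (pos_INR n).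
  unfold Rdiv. rewrite <- (Rmult_1_r 2) at 2. apply Rmult_le_compat_l; [lra|].
  rewrite <- Rinv_1. apply Rinv_le_contravar; lra.
Qed.

Lemma dset_ne x y : exists r, dset x y r.
Proof. eexists. exists 0%nat; reflexivity. Qed.

Definition dist (x y : pts) : R :=
  proj1_sig (completeness (dset x y) (dset_bound x y) (dset_ne x y)).

Lemma dist_ge x y n : w n * bnorm (bsub (proj1_sig x n) (proj1_sig y n)) <= dist x y.
Proof. unfold dist. destruct completeness as [s Hs]. simpl. apply (proj1 Hs). exists n; auto. Qed.

Lemma dist_le x y t :
  (forall n, w n * bnorm (bsub (proj1_sig x n) (proj1_sig y n)) <= t) -> dist x y <= t.
Proof.
  intros H. unfold dist. destruct completeness as [s Hs]. simpl.
  apply (proj2 Hs). intros r [n ->]; auto.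
Qed.

Lemma dist_metric : is_metric dist.
Proof.
  assert (Hge : forall (x y : pts) n, 0 <= w n * bnorm (bsub (proj1_sig x n) (proj1_sig y n))).
  { intros x y n. apply Rmult_le_pos; [apply Rlt_le, w_pos|apply bnorm_nonneg]. }
  split; [|split; [|split]].
  - intros x y. eapply Rle_trans; [apply (Hge x y 0%nat)|apply dist_ge].
  - intros x y. split.
    + intros H0. assert (E : proj1_sig x = proj1_sig y).
      { extensionality n. apply bsub_eq0. pose proof (dist_ge x y n). pose proof (w_pos n).
        pose proof (bnorm_nonneg (bsub (proj1_sig x n) (proj1_sig y n))). nra. }
      destruct x as [phi p], y as [psi p']. simpl in E. subst psi. f_equal. apply proof_irrelevance.
    + intros ->. apply Rle_antisym; [|eapply Rle_trans; [apply (Hge y y 0%nat)|apply dist_ge]].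
      apply dist_le. intros n. rewrite bsub_self, bnorm0. lra.
  - intros x y. apply Rle_antisym; apply dist_le; intros n; rewrite bsub_sym; apply dist_ge.
  - intros x y z. apply dist_le. intros n. pose proof (dist_ge x y n). pose proof (dist_ge y z n).
    pose proof (bsub_tri (proj1_sig x n) (proj1_sig y n) (proj1_sig z n)).
    pose proof (w_pos n). nra.
Qed.

Lemma dist_q n k k' : w n * bnorm (bsub (h n k) (h n k')) <= dist (q k) (q k').
Proof. apply (dist_ge (q k) (q k') n). Qed.

(* q is continuous: finitely many h n are close near k, the tail terms are small. *)
Lemma q_cont (k : K) (eps : R) : 0 < eps ->
  exists U, is_open U /\ U k /\ forall z, U z -> dist (q k) (q z) < eps.
Proof.
  intros He. destruct (small_inv (eps / 4)) as [N HN]; [lra|].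
  destruct (open_finite k (fun n z => bnorm (bsub (h n z) (h n k)) < eps / 2) N) as [U [HU [Uk HUP]]].
  { intros n _. destruct (proj1 (HTc (u n)) k (eps / 2)) as [U [HU [Uk HUt]]]; [lra|].
    exists U; auto. }
  exists U; split; auto; split; auto. intros z Uz.
  apply Rle_lt_trans with (eps / 2); [|lra]. apply dist_le. intros n. simpl.
  destruct (Nat.ltb_spec n N) as [Hn|Hn].
  - specialize (HUP z Uz n Hn). rewrite bsub_sym in HUP. pose proof (w_le1 n). pose proof (w_pos n).
    pose proof (bnorm_nonneg (bsub (h n k) (h n z))). fold (h n). nra.
  - fold (h n). eapply Rle_trans; [apply w_term|].
    pose proof (le_INR N n ltac:(lia)). pose proof (pos_INR N).
    assert (/ (INR n + 1) <= / (INR N + 1)) by (apply Rinv_le_contravar; lra). lra.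
Qed.

Definition K0 : TopSpace := metric_top dist.

Definition net_values (i : nat) : X :=
  let '(n, mj) := of_nat i in
  let '(m, j) := of_nat mj in
  match nth_error (net K pts dist q dist_metric HKc q_surj q_cont m) j with
  | Some k => h n k
  | None => bzero end.

Definition X0 : X -> Prop := span_closure net_values.

Lemma h_in_X0 n k : X0 (h n k).
Proof.
  apply span_closure_approx. intros eps He. pose proof (w_pos n) as Hw.
  destruct (small_inv (w n * eps)) as [m Hm]; [nra|].
  destruct (net_spec K pts dist q dist_metric HKc q_surj q_cont m (q k)) as [k' [Hk' Hd]].
  destruct (In_nth_error _ _ Hk') as [j Hj].
  exists (net_values (to_nat (n, to_nat (m, j)))). split; [apply span_closure_D|].
  unfold net_values. rewrite !cancel_of_to, Hj.
  pose proof (dist_q n k' k) as Hq. rewrite bsub_sym.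
  apply (Rmult_lt_reg_l (w n)); auto. lra.
Qed.

Lemma T_in_X0 y k : X0 (T y k).
Proof.
  apply span_closure_approx. intros eps He. destruct (h_dense y eps He) as [n Hn].
  exists (h n k). split; [apply h_in_X0 | apply Hn].
Qed.

Lemma T_fibre y k k' : q k = q k' -> T y k = T y k'.
Proof.
  intros E. assert (Eh : forall n, h n k = h n k').
  { intros n. apply (f_equal (fun x => proj1_sig x n)) in E. exact E. }
  apply bsub_eq0. apply Rle_antisym; [|apply bnorm_nonneg]. apply Rnot_lt_le. intros Hpos.
  destruct (h_dense y (bnorm (bsub (T y k) (T y k')) / 2)) as [n Hn]; [lra|].
  pose proof (bsub_tri (T y k) (h n k) (T y k')) as H1.
  pose proof (Hn k) as H2. pose proof (Hn k') as H3. rewrite Eh in H1, H2. rewrite bsub_sym in H3. lra.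
Qed.

Definition section (x : pts) : K := proj1_sig (constructive_indefinite_description _ (q_surj x)).

Lemma section_spec x : x = q (section x).
Proof. unfold section. destruct constructive_indefinite_description; auto. Qed.

Definition T0 (y : Y) : K0 -> X := fun x => T y (section x).

Lemma T0_q y k : T0 y (q k) = T y k.
Proof. unfold T0. apply T_fibre. symmetry. apply section_spec. Qed.

(* T0 y is within eps/3 of h n, which is (w n * eps/3)-uniformly continuous for dist. *)
Lemma T0_cont y : continuous (T0 y).
Proof.
  intros x eps He.
  destruct (h_dense y (eps / 3)) as [n Hn]; [lra|]. pose proof (w_pos n) as Hw.
  exists (fun z => dist x z < w n * (eps / 3)). split; [apply (ball_open dist_metric)|]. split.
  - rewrite (d_refl dist_metric). nra.
  - intros z Hz. unfold T0.
    pose proof (dist_q n (section z) (section x)) as H3. rewrite <- !section_spec in H3.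
    rewrite (d_sym dist_metric) in H3.
    assert (H4 : bnorm (bsub (h n (section z)) (h n (section x))) < eps / 3).
    { apply (Rmult_lt_reg_l (w n)); auto. lra. }
    pose proof (Hn (section z)) as H1. pose proof (Hn (section x)) as H2. rewrite bsub_sym in H2.
    pose proof (bsub_tri (T y (section z)) (h n (section z)) (T y (section x))) as H5.
    pose proof (bsub_tri (h n (section z)) (h n (section x)) (T y (section x))) as H6.
    lra.
Qed.

Lemma T0_embedding : embeds_Banach_into_C Y K0 X X0.
Proof.
  exists T0, A, B. split; [exact HA|]. split; [exact HB|]. split; [|split].
  - intros y. split; [apply T0_cont|]. intros x. apply T_in_X0.
  - intros a y1 y2 x. unfold T0. apply HTl.
  - intros y. destruct (HTn y) as [s [Hs Hs']]. exists s. split; auto.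
    apply (supnorm_transfer (T y)); auto.
    + intros x. exists (section x). reflexivity.
    + intros k. exists (q k). symmetry. apply T0_q.
Qed.
End Construction.

Theorem lemma2p4 (K : TopSpace) (X Y : Banach) :
  top_compact K -> hausdorff K -> scattered K ->
  separable Y ->
  embeds_Banach_into_C Y K X (fun _ => True) ->
  exists (K0 : TopSpace) (X0 : X -> Prop),
    countable K0 /\ metrizable K0 /\ top_compact K0 /\
    closed_subspace X0 /\ separable_sub X0 /\
    embeds_Banach_into_C Y K0 X X0 /\
    embeds_C_into_C K0 X X0 K X (fun _ => True).
Proof.
  intros HKc _ HKs [u Hu] [T [A [B [HA [HB [HTc [HTl HTn]]]]]]].
  pose proof (dist_metric K X Y u T A B HB HTn) as Hd.
  pose proof (q_surj K X Y u T) as Hsurj.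
  pose proof (q_cont K X Y u T A B HB HTc HTn) as Hcont.
  exists (K0 K X Y u T A B HB HTn), (X0 K X Y HKc u T A B HB HTc HTn).
  split; [exact (image_countable _ _ _ _ Hd HKc Hsurj Hcont HKs)|].
  split; [exact (metric_top_metrizable _ _ Hd)|].
  split; [exact (image_compact _ _ _ _ HKc Hsurj Hcont)|].
  split; [apply span_closure_subspace|].
  split; [apply span_closure_separable|].
  split; [exact (T0_embedding K X Y HKc u Hu T A B HA HB HTc HTl HTn)|].
  exact (compose_embedding _ _ _ _ HKc Hsurj Hcont X _).
Qed.
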